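(* Let $-7/4<s\le0$. Then for every $t\in\mathbb{R}$ the bilinear operator $B_2$ defined in the context maps $\dot H^0\times\dot H^s$ into $\dot H^s$ and satisfies $$\|B_2(u,v)\|_{\dot H^s}\le c_2''(s)\|u\|_{\dot H^0}\|v\|_{\dot H^s},$$ with a constant $c_2''(s)$ depending only on $s$.
   Context: Write $\mathbb{Z}_0=\mathbb{Z}\setminus\{0\}$. For $s\in\mathbb{R}$, $\dot H^s$ denotes the Hilbert space of complex sequences $v=(v_k)_{k\in\mathbb{Z}_0}$ with $\|v\|_{\dot H^s}^2=\sum_{k\in\mathbb{Z}_0}|k|^{2s}|v_k|^2<\infty$. For $t\in\mathbb{R}$, $$B_2(u,v)_k=\sum_{k_1+k_2=k,\ k_1,k_2\in\mathbb{Z}_0}\frac{e^{3ikk_1k_2t}u_{k_1}v_{k_2}}{k_1k_2},\qquad k\in\mathbb{Z}_0.$$ *)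

From Stdlib Require Import Reals ZArith Lra.
From Coquelicot Require Import Coquelicot.
Open Scope R_scope.

(* Complex sequences indexed by Z; the value at index 0 is irrelevant
   (all sums below range over Z \ {0} only). *)
Definition zseq := Z -> C.

Definition zpos (n : nat) : Z := Z.of_nat (S n).
Definition zneg (n : nat) : Z := (- Z.of_nat (S n))%Z.

Definition ex_zsum (f : Z -> R) : Prop :=
  ex_series (fun n => f (zpos n) + f (zneg n)).
Definition zsum (f : Z -> R) : R :=
  Series (fun n => f (zpos n) + f (zneg n)).

Definition ex_zsum_abs_C (f : Z -> C) : Prop :=
  ex_zsum (fun k => Cmod (f k)).
Definition zsum_C (f : Z -> C) : C :=
  (zsum (fun k => Re (f k)), zsum (fun k => Im (f k))).

Definition wt (s : R) (k : Z) : R := Rpower (IZR (Z.abs k)) (2 * s).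

Definition in_Hs (s : R) (v : zseq) : Prop :=
  ex_zsum (fun k => wt s k * (Cmod (v k))^2).

Definition Hs_norm (s : R) (v : zseq) : R :=
  sqrt (zsum (fun k => wt s k * (Cmod (v k))^2)).

Definition cexpi (x : R) : C := (cos x, sin x).

(* The summand of B_2(u,v)_k indexed by k1 (with k2 = k - k1);
   it is 0 when k2 = 0, so summing over k1 in Z_0 realises the
   constraint k1, k2 in Z_0. *)
Definition B2_term (t : R) (u v : zseq) (k k1 : Z) : C :=
  let k2 := (k - k1)%Z in
  if Z.eqb k2 0 then 0%C
  else (cexpi (3 * IZR k * IZR k1 * IZR k2 * t) * u k1 * v k2
        / (RtoC (IZR k1) * RtoC (IZR k2)))%C.

Definition B2 (t : R) (u v : zseq) : zseq :=
  fun k => zsum_C (B2_term t u v k).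

From Stdlib Require Import Reals ZArith Lra Lia List Psatz FinFun.
From Coquelicot Require Import Coquelicot.
Open Scope R_scope.

(* For fixed k, |B2(u,v)_k| <= sum_{k1} |u_{k1}| |v_{k2}| / (|k1| |k2|) with k2 = k - k1, so by
   Cauchy-Schwarz |k|^{2s} |B2(u,v)_k|^2 <= ||u||^2 sum_{k1} |k|^{2s} |v_{k2}|^2 / (k1^2 k2^2).
   For -2 <= s <= 0 the elementary kernel bound
     |k|^{2s} / (k1^2 k2^2) <= 16 (1/k1^2 + 1/k^2) |k2|^{2s}
   holds (split according to |k2| <= 2|k| or |k1| > |k2|/2), and since sum_j 1/j^2 <= 4,
   summing over k and k1 yields ||B2(u,v)||^2_{H^s} <= 128 ||u||^2 ||v||^2_{H^s}.
   All sums are first taken over the finite windows 0 < |j| <= N and the bounds then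
   passed to the limit. *)

Definition sumL {A : Type} (f : A -> R) (l : list A) : R :=
  fold_right (fun z acc => f z + acc) 0 l.

Section FiniteSums.
Context {A : Type}.
Implicit Types (f g : A -> R) (l m : list A).

Lemma sumL_le f g l : (forall z, In z l -> f z <= g z) -> sumL f l <= sumL g l.
Proof.
  induction l as [|a l IH]; intros H; simpl; [lra|].
  assert (f a <= g a) by (apply H; left; reflexivity).
  assert (sumL f l <= sumL g l) by (apply IH; intros z Hz; apply H; right; exact Hz).
  lra.
Qed.

Lemma sumL_ext f g l : (forall z, In z l -> f z = g z) -> sumL f l = sumL g l.
Proof.
  intros H; apply Rle_antisym; apply sumL_le; intros z Hz; rewrite H by exact Hz; lra.
Qed.

Lemma sumL_nonneg f l : (forall z, In z l -> 0 <= f z) -> 0 <= sumL f l.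
Proof.
  induction l as [|a l IH]; intros H; simpl; [lra|].
  assert (0 <= f a) by (apply H; left; reflexivity).
  assert (0 <= sumL f l) by (apply IH; intros z Hz; apply H; right; exact Hz).
  lra.
Qed.

Lemma sumL_scal c f l : sumL (fun z => c * f z) l = c * sumL f l.
Proof. induction l as [|a l IH]; simpl; [|rewrite IH]; ring. Qed.

Lemma sumL_plus f g l : sumL (fun z => f z + g z) l = sumL f l + sumL g l.
Proof. induction l as [|a l IH]; simpl; [|rewrite IH]; ring. Qed.

Lemma sumL_app f l m : sumL f (l ++ m) = sumL f l + sumL f m.
Proof. induction l as [|a l IH]; simpl; [|rewrite IH]; ring. Qed.

Lemma sumL_incl f l m : NoDup l -> incl l m -> (forall z, 0 <= f z) ->
  sumL f l <= sumL f m.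
Proof.
  revert m; induction l as [|a l IH]; intros m Hnd Hlm Hf; simpl.
  - apply sumL_nonneg; auto.
  - destruct (in_split a m (Hlm a (or_introl eq_refl))) as [m1 [m2 ->]].
    inversion Hnd as [|? ? Hal Hl]; subst.
    assert (sumL f l <= sumL f (m1 ++ m2)).
    { apply IH; auto. intros z Hz.
      destruct (in_app_or _ _ _ (Hlm z (or_intror Hz))) as [H|[H|H]];
        apply in_or_app; auto. subst; contradiction. }
    rewrite sumL_app in *. simpl. lra.
Qed.

Lemma Cauchy_Schwarz_step s X Y x y : 0 <= X -> 0 <= Y -> s ^ 2 <= X * Y ->
  (x * y + s) ^ 2 <= (x ^ 2 + X) * (y ^ 2 + Y).
Proof.
  intros HX HY Hs.
  assert (s ^ 2 * (x * y) ^ 2 <= X * Y * (x * y) ^ 2)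
    by (apply Rmult_le_compat_r; [apply pow2_ge_0 | exact Hs]).
  assert (0 <= (X * y ^ 2 - x ^ 2 * Y) ^ 2) by apply pow2_ge_0.
  assert (0 <= X * y ^ 2 + x ^ 2 * Y) by nra.
  nra.
Qed.

Lemma sumL_Cauchy_Schwarz f g l :
  sumL (fun z => f z * g z) l ^ 2 <= sumL (fun z => f z ^ 2) l * sumL (fun z => g z ^ 2) l.
Proof.
  induction l as [|a l IH]; simpl; [lra|].
  apply Cauchy_Schwarz_step; auto; apply sumL_nonneg; intros; apply pow2_ge_0.
Qed.

End FiniteSums.

Lemma sumL_map {A B : Type} (f : A -> R) (g : B -> A) (l : list B) :
  sumL f (map g l) = sumL (fun z => f (g z)) l.
Proof. induction l as [|a l IH]; simpl; [|rewrite IH]; ring. Qed.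

Lemma sumL_swap {A B : Type} (g : A -> B -> R) (K : list A) (L : list B) :
  sumL (fun k => sumL (g k) L) K = sumL (fun j => sumL (fun k => g k j) K) L.
Proof.
  induction K as [|a K IH]; simpl.
  - induction L as [|b L IHL]; simpl; [|rewrite <- IHL]; ring.
  - rewrite IH, sumL_plus. reflexivity.
Qed.

Lemma is_lim_seq_sumL {A : Type} (h : nat -> A -> R) (L : A -> R) (K : list A) :
  (forall k, In k K -> is_lim_seq (fun M => h M k) (L k)) ->
  is_lim_seq (fun M => sumL (h M) K) (sumL L K).
Proof.
  induction K as [|a K IH]; intros H; simpl; [apply is_lim_seq_const|].
  apply (is_lim_seq_plus' (fun M => h M a) (fun M => sumL (h M) K)).
  - apply H; left; reflexivity.
  - apply IH. intros k Hk; apply H; right; exact Hk.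
Qed.

Fixpoint zwindow (n : nat) : list Z :=
  match n with O => nil | S m => zpos m :: zneg m :: zwindow m end.

Lemma in_zwindow n z : In z (zwindow n) <-> z <> 0%Z /\ (Z.abs z <= Z.of_nat n)%Z.
Proof.
  induction n as [|n IH]; simpl; [split; [tauto | lia]|].
  unfold zpos, zneg. rewrite IH. split; [intros [H|[H|H]]; lia|].
  intros [Hz Hn].
  destruct (Z.eq_dec z (Z.of_nat (S n))); [left; lia|].
  destruct (Z.eq_dec z (- Z.of_nat (S n))); [right; left; lia|].
  right; right; lia.
Qed.

Lemma NoDup_zwindow n : NoDup (zwindow n).
Proof.
  induction n as [|n IH]; simpl; constructor.
  - intros [H|H]; [unfold zpos, zneg in H; lia|].
    apply in_zwindow in H. unfold zpos in H. lia.
  - constructor; [|exact IH]. intros H. apply in_zwindow in H. unfold zneg in H. lia.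
Qed.

Lemma zwindow_covers (l : list Z) : exists N, forall z, In z l -> z <> 0%Z -> In z (zwindow N).
Proof.
  induction l as [|a l [N HN]]; [exists O; intros z []|].
  exists (Nat.max N (Z.to_nat (Z.abs a))). intros z [<-|Hz] Hz0; apply in_zwindow; split; auto.
  - lia.
  - specialize (HN z Hz Hz0). apply in_zwindow in HN. lia.
Qed.

Section ZSums.
Variable g : Z -> R.

Let G (n : nat) : R := g (zpos n) + g (zneg n).

Lemma sum_n_zwindow N : sum_n G N = sumL g (zwindow (S N)).
Proof.
  induction N as [|N IH]; [rewrite sum_O | rewrite sum_Sn, IH]; simpl; unfold G, plus; simpl; ring.
Qed.

Lemma is_lim_zwindow l : is_series G l -> is_lim_seq (fun M => sumL g (zwindow (S M))) l.
Proof. intros Hl. eapply is_lim_seq_ext; [exact sum_n_zwindow | exact Hl]. Qed.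

Hypothesis g_nonneg : forall z, 0 <= g z.

Lemma sumL_zwindow_le_zsum n : ex_zsum g -> sumL g (zwindow n) <= zsum g.
Proof.
  intros [l Hl]. unfold zsum. rewrite (is_series_unique _ _ Hl).
  apply Rle_trans with (sumL g (zwindow (S n))).
  { apply sumL_incl; auto using NoDup_zwindow. intros z Hz; right; right; exact Hz. }
  rewrite <- sum_n_zwindow. apply (is_lim_seq_incr_compare _ l Hl).
  intros m. rewrite sum_Sn. unfold G, plus; simpl.
  pose proof (g_nonneg (zpos (S m))); pose proof (g_nonneg (zneg (S m))). lra.
Qed.

Lemma sumL_le_zsum l : NoDup l -> g 0%Z = 0 -> ex_zsum g -> sumL g l <= zsum g.
Proof.
  intros Hnd Hg0 Hex. destruct (zwindow_covers l) as [N HN].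
  apply Rle_trans with (sumL g (0%Z :: zwindow N)).
  - apply sumL_incl; auto. intros z Hz.
    destruct (Z.eq_dec z 0) as [->|Hz0]; [left; reflexivity | right; auto].
  - simpl. rewrite Hg0, Rplus_0_l. apply sumL_zwindow_le_zsum, Hex.
Qed.

Lemma zsum_nonneg : ex_zsum g -> 0 <= zsum g.
Proof.
  intros Hex. apply (Rle_trans _ (sumL g (zwindow 0))); [simpl; lra|].
  now apply sumL_zwindow_le_zsum.
Qed.

Lemma ex_zsum_bounded M : (forall n, sumL g (zwindow n) <= M) -> ex_zsum g /\ zsum g <= M.
Proof.
  intros HM.
  assert (Hincr : forall m, sum_n G m <= sum_n G (S m)).
  { intros m. rewrite sum_Sn. unfold G, plus; simpl.
    pose proof (g_nonneg (zpos (S m))); pose proof (g_nonneg (zneg (S m))). lra. }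
  assert (HG : forall m, sum_n G m <= M) by (intros m; rewrite sum_n_zwindow; apply HM).
  destruct (ex_finite_lim_seq_incr _ M Hincr HG) as [l Hl].
  split; [exists l; exact Hl|].
  change (zsum g) with (Series G). rewrite (is_series_unique _ _ Hl).
  exact (is_lim_seq_le _ (fun _ => M) l M HG Hl (is_lim_seq_const M)).
Qed.

End ZSums.

Lemma is_lim_zwindow_dominated (f g : Z -> R) : (forall z, Rabs (f z) <= g z) -> ex_zsum g ->
  is_lim_seq (fun M => sumL f (zwindow (S M))) (zsum f).
Proof.
  intros Hfg Hg. apply is_lim_zwindow, Series_correct.
  eapply (@ex_series_le R_AbsRing R_CompleteNormedModule); [|exact Hg]. intros n.
  change (Rabs (f (zpos n) + f (zneg n)) <= g (zpos n) + g (zneg n)).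
  eapply Rle_trans; [apply Rabs_triang|]. pose proof (Hfg (zpos n)); pose proof (Hfg (zneg n)). lra.
Qed.

Lemma Rpower_4 x : 0 < x -> Rpower x 4 = x ^ 4.
Proof. intros Hx. replace 4 with (INR 4) by (simpl; ring). now apply Rpower_pow. Qed.

Section KernelInequality.
(* X, Y, Z stand for |k|, |k1|, |k - k1| and r for 2s. *)
Variables (r X Y Z : R).
Hypotheses (r_ge : -4 <= r) (r_le : r <= 0) (X_ge1 : 1 <= X) (Y_ge1 : 1 <= Y) (Z_ge1 : 1 <= Z).

Lemma kernel_ineq_near : Z <= 2 * X -> Rpower X r / (Y ^ 2 * Z ^ 2) <= 16 * Rpower Z r / Y ^ 2.
Proof.
  intros HZX.
  assert (H2 : Rpower 2 (- r) <= 16).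
  { replace 16 with (Rpower 2 4) by (rewrite Rpower_4; lra). apply Rle_Rpower; lra. }
  assert (HZ : Rpower Z (- r) <= 16 * Rpower X (- r)).
  { apply Rle_trans with (Rpower (2 * X) (- r)); [apply Rle_Rpower_l; lra|].
    rewrite <- Rpower_mult_distr by lra.
    apply Rmult_le_compat_r; [left; apply exp_pos | exact H2]. }
  replace r with (- - r) by ring. rewrite (Rpower_Ropp X (- r)), (Rpower_Ropp Z (- r)).
  assert (0 < Rpower X (- r)) by apply exp_pos.
  assert (0 < Rpower Z (- r)) by apply exp_pos.
  assert (1 <= Z ^ 2) by nra. assert (1 <= Y ^ 2) by nra.
  unfold Rdiv. rewrite Rinv_mult.
  apply Rle_trans with (/ Rpower X (- r) * / Y ^ 2).
  - apply Rmult_le_compat_l; [left; apply Rinv_0_lt_compat; lra|].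
    rewrite <- (Rmult_1_r (/ Y ^ 2)) at 2. apply Rmult_le_compat_l.
    + left; apply Rinv_0_lt_compat; lra.
    + rewrite <- Rinv_1. apply Rinv_le_contravar; lra.
  - apply Rmult_le_compat_r; [left; apply Rinv_0_lt_compat; lra|].
    apply (Rmult_le_reg_l (Rpower X (- r) * Rpower Z (- r))); [nra|].
    field_simplify; lra.
Qed.

Lemma kernel_ineq_far : 2 * X < Z -> Z <= X + Y ->
  Rpower X r / (Y ^ 2 * Z ^ 2) <= 16 * Rpower Z r / X ^ 2.
Proof.
  intros HXZ HZ.
  assert (HY : Z ^ 2 <= 4 * Y ^ 2) by nra.
  assert (H4 : Rpower X r * X ^ 4 <= Rpower Z r * Z ^ 4).
  { rewrite <- !Rpower_4, <- !Rpower_plus by lra. apply Rle_Rpower_l; lra. }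
  assert (0 < Rpower X r) by apply exp_pos.
  assert (0 < Rpower Z r) by apply exp_pos.
  assert (1 <= X ^ 2) by nra.
  apply Rle_trans with (4 * Rpower X r / Z ^ 4).
  - unfold Rdiv. rewrite (Rmult_comm 4), Rmult_assoc. apply Rmult_le_compat_l; [lra|].
    replace (4 * / Z ^ 4) with (/ (Z ^ 2 / 4 * Z ^ 2)) by (field; lra).
    apply Rinv_le_contravar; [apply Rmult_lt_0_compat | apply Rmult_le_compat_r]; nra.
  - apply Rle_trans with (4 * Rpower Z r / X ^ 4).
    + unfold Rdiv. apply (Rmult_le_reg_r (X ^ 4 * Z ^ 4)).
      { apply Rmult_lt_0_compat; apply pow_lt; lra. }
      field_simplify; [nra | lra | lra].
    + unfold Rdiv. apply (Rmult_le_reg_r (X ^ 4)); [apply pow_lt; lra|].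
      field_simplify; [nra | lra | lra].
Qed.

Lemma kernel_ineq : Z <= X + Y ->
  Rpower X r / (Y ^ 2 * Z ^ 2) <= 16 * (/ Y ^ 2 + / X ^ 2) * Rpower Z r.
Proof.
  intros HZ.
  assert (0 < Rpower Z r) by apply exp_pos.
  assert (0 < / X ^ 2) by (apply Rinv_0_lt_compat; nra).
  assert (0 < / Y ^ 2) by (apply Rinv_0_lt_compat; nra).
  destruct (Rle_lt_dec Z (2 * X)) as [Hnear|Hfar].
  - pose proof (kernel_ineq_near Hnear). unfold Rdiv in *. nra.
  - pose proof (kernel_ineq_far Hfar HZ). unfold Rdiv in *. nra.
Qed.

End KernelInequality.

Definition absz (k : Z) : R := IZR (Z.abs k).

Lemma absz_ge1 k : k <> 0%Z -> 1 <= absz k.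
Proof. intros Hk. unfold absz. apply IZR_le. lia. Qed.

Lemma inv_absz_sq_le1 k : k <> 0%Z -> / absz k ^ 2 <= 1.
Proof.
  intros Hk. pose proof (absz_ge1 k Hk).
  rewrite <- Rinv_1. apply Rinv_le_contravar; nra.
Qed.

Lemma inv_absz_sq_nonneg k : 0 <= / absz k ^ 2.
Proof.
  unfold absz. destruct (Z.eq_dec k 0) as [->|Hk].
  - simpl. rewrite Rmult_0_l, Rinv_0. lra.
  - left. apply Rinv_0_lt_compat, pow_lt. apply IZR_lt. lia.
Qed.

Lemma wt_pos s k : 0 < wt s k.
Proof. apply exp_pos. Qed.

Lemma wt_Cmod_sq_nonneg s (w : zseq) k : 0 <= wt s k * Cmod (w k) ^ 2.
Proof. apply Rmult_le_pos; [left; apply wt_pos | apply pow2_ge_0]. Qed.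

Lemma wt0 k : k <> 0%Z -> wt 0 k = 1.
Proof. intros Hk. unfold wt. rewrite Rmult_0_r. apply Rpower_O. apply IZR_lt. lia. Qed.

Lemma wt_kernel_ineq s k k1 : -2 <= s <= 0 -> k <> 0%Z -> k1 <> 0%Z -> (k - k1 <> 0)%Z ->
  wt s k / (absz k1 ^ 2 * absz (k - k1) ^ 2)
  <= 16 * (/ absz k1 ^ 2 + / absz k ^ 2) * wt s (k - k1).
Proof.
  intros Hs Hk Hk1 Hk2. apply kernel_ineq; try lra; try (apply absz_ge1; assumption).
  unfold absz. rewrite <- plus_IZR. apply IZR_le. lia.
Qed.

Lemma sum_inv_absz_sq_zwindow n :
  sumL (fun j => / absz j ^ 2) (zwindow n) <= 4 - 4 / (INR n + 1).
Proof.
  induction n as [|n IH]; [simpl; lra|].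
  change (sumL (fun j => / absz j ^ 2) (zwindow (S n)))
    with (/ absz (zpos n) ^ 2 + (/ absz (zneg n) ^ 2 + sumL (fun j => / absz j ^ 2) (zwindow n))).
  replace (absz (zpos n)) with (INR n + 1)
    by (unfold absz, zpos; rewrite <- S_INR, INR_IZR_INZ; f_equal; lia).
  replace (absz (zneg n)) with (INR n + 1)
    by (unfold absz, zneg; rewrite <- S_INR, INR_IZR_INZ; f_equal; lia).
  rewrite S_INR. pose proof (pos_INR n).
  set (y := INR n + 1) in *. assert (1 <= y) by (unfold y; lra).
  assert (2 / y ^ 2 <= 4 / y - 4 / (y + 1)).
  { replace (4 / y - 4 / (y + 1)) with (4 / (y * (y + 1))) by (field; lra).
    unfold Rdiv. apply (Rmult_le_reg_r (y ^ 2 * (y + 1))); [apply Rmult_lt_0_compat; nra|].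
    field_simplify; nra. }
  unfold Rdiv in *. lra.
Qed.

Lemma sum_inv_absz_sq_le4 n : sumL (fun j => / absz j ^ 2) (zwindow n) <= 4.
Proof.
  pose proof (sum_inv_absz_sq_zwindow n).
  assert (0 < INR n + 1) by (pose proof (pos_INR n); lra).
  assert (0 < 4 / (INR n + 1)) by (apply Rdiv_lt_0_compat; lra).
  lra.
Qed.

Lemma sumL_inv_absz_sq_mul_le (a : Z -> R) B n : 0 <= B ->
  (forall j, In j (zwindow n) -> a j <= B) ->
  sumL (fun j => / absz j ^ 2 * a j) (zwindow n) <= 4 * B.
Proof.
  intros HB Ha. apply Rle_trans with (sumL (fun j => B * / absz j ^ 2) (zwindow n)).
  - apply sumL_le. intros j Hj. rewrite Rmult_comm.
    apply Rmult_le_compat_r; [apply inv_absz_sq_nonneg | auto].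
  - rewrite sumL_scal. pose proof (sum_inv_absz_sq_le4 n). nra.
Qed.

Lemma im_le_Cmod c : Rabs (Im c) <= Cmod c.
Proof.
  rewrite <- (Rabs_pos_eq (Cmod c)) by apply Cmod_ge_0.
  apply Rsqr_le_abs_0. unfold Rsqr. pose proof (Cmod2_alt c). pose proof (pow2_ge_0 (Re c)). nra.
Qed.

Lemma Cmod_cexpi x : Cmod (cexpi x) = 1.
Proof.
  unfold cexpi, Cmod; simpl. rewrite !Rmult_1_r, <- sqrt_1. f_equal.
  pose proof (sin2_cos2 x). unfold Rsqr in *. lra.
Qed.

Definition sumL_C (f : Z -> C) (l : list Z) : C :=
  (sumL (fun z => Re (f z)) l, sumL (fun z => Im (f z)) l).

Lemma Cmod_sumL_C_le f l : Cmod (sumL_C f l) <= sumL (fun z => Cmod (f z)) l.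
Proof.
  induction l as [|a l IH]; unfold sumL_C in *; simpl.
  - change (Cmod 0 <= 0). rewrite Cmod_0. lra.
  - change (Re (f a) + sumL (fun z => Re (f z)) l, Im (f a) + sumL (fun z => Im (f z)) l)
      with (Cplus (f a) (sumL (fun z => Re (f z)) l, sumL (fun z => Im (f z)) l)).
    eapply Rle_trans; [apply Cmod_triangle | lra].
Qed.

Definition B2_majorant (v : zseq) (k k1 : Z) : R :=
  if Z.eqb (k - k1) 0 then 0 else Cmod (v (k - k1)%Z) / (absz k1 * absz (k - k1)).

(* The summand of [in_Hs s v], set to 0 at [j = 0] so that sums over shifted windows
   [k - k1] may harmlessly pass through 0. *)
Definition hs_term (s : R) (v : zseq) (j : Z) : R :=
  if Z.eqb j 0 then 0 else wt s j * Cmod (v j) ^ 2.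

Lemma B2_majorant_nonneg v k k1 : k1 <> 0%Z -> 0 <= B2_majorant v k k1.
Proof.
  intros Hk1. unfold B2_majorant. destruct (Z.eqb_spec (k - k1) 0) as [_|Hk2]; [lra|].
  pose proof (absz_ge1 k1 Hk1). pose proof (absz_ge1 _ Hk2).
  apply Rmult_le_pos; [apply Cmod_ge_0 | left; apply Rinv_0_lt_compat; nra].
Qed.

Lemma Cmod_B2_term_le t u v k k1 : k1 <> 0%Z ->
  Cmod (B2_term t u v k k1) <= Cmod (u k1) * B2_majorant v k k1.
Proof.
  intros Hk1. unfold B2_term, B2_majorant. destruct (Z.eqb_spec (k - k1) 0) as [_|Hk2].
  - rewrite Cmod_0. lra.
  - rewrite Cmod_div.
    2:{ intros H. apply (f_equal Cmod) in H. rewrite Cmod_mult, !Cmod_R, Rabs_R0 in H.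
        apply Rmult_integral in H.
        destruct H as [H|H]; apply Rabs_eq_0, eq_IZR_R0 in H; lia. }
    rewrite !Cmod_mult, Cmod_cexpi, !Cmod_R, <- !abs_IZR. right. unfold absz, Rdiv. ring.
Qed.

Lemma wt_B2_majorant_sq_le s v k k1 : -2 <= s <= 0 -> k <> 0%Z -> k1 <> 0%Z ->
  wt s k * B2_majorant v k k1 ^ 2
  <= 16 * (/ absz k1 ^ 2 + / absz k ^ 2) * hs_term s v (k - k1).
Proof.
  intros Hs Hk Hk1. unfold B2_majorant, hs_term. destruct (Z.eqb_spec (k - k1) 0) as [_|Hk2].
  - right; ring.
  - pose proof (wt_kernel_ineq s k k1 Hs Hk Hk1 Hk2).
    pose proof (absz_ge1 k1 Hk1). pose proof (absz_ge1 _ Hk2).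
    replace (wt s k * (Cmod (v (k - k1)%Z) / (absz k1 * absz (k - k1))) ^ 2)
      with (wt s k / (absz k1 ^ 2 * absz (k - k1) ^ 2) * Cmod (v (k - k1)%Z) ^ 2)
      by (field; lra).
    rewrite <- Rmult_assoc. apply Rmult_le_compat_r; [apply pow2_ge_0 | assumption].
Qed.

Lemma hs_term_nonneg s v j : 0 <= hs_term s v j.
Proof.
  unfold hs_term. destruct (Z.eqb j 0); [lra | apply wt_Cmod_sq_nonneg].
Qed.

Lemma sumL_hs_term_le s v (g : Z -> Z) N : in_Hs s v -> Injective g ->
  sumL (fun k => hs_term s v (g k)) (zwindow N) <= zsum (fun k => wt s k * Cmod (v k) ^ 2).
Proof.
  intros Hv Hg.
  assert (E : forall n, hs_term s v (zpos n) + hs_term s v (zneg n)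
                   = wt s (zpos n) * Cmod (v (zpos n)) ^ 2 + wt s (zneg n) * Cmod (v (zneg n)) ^ 2).
  { intros n. unfold hs_term, zpos, zneg.
    rewrite (proj2 (Z.eqb_neq _ 0)), (proj2 (Z.eqb_neq (- _) 0)) by lia. reflexivity. }
  replace (zsum (fun k => wt s k * Cmod (v k) ^ 2)) with (zsum (hs_term s v))
    by (apply Series_ext; exact E).
  rewrite <- (sumL_map (hs_term s v) g).
  apply sumL_le_zsum.
  - apply hs_term_nonneg.
  - apply Injective_map_NoDup; [exact Hg | apply NoDup_zwindow].
  - unfold hs_term. reflexivity.
  - eapply ex_series_ext; [intros n; symmetry; apply E | exact Hv].
Qed.

Section B2Estimate.
Variables (s t : R) (u v : zseq).
Hypotheses (s_range : -2 <= s <= 0) (u_L2 : in_Hs 0 u) (v_Hs : in_Hs s v).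

Let normu2 := zsum (fun k => wt 0 k * Cmod (u k) ^ 2).
Let normv2 := zsum (fun k => wt s k * Cmod (v k) ^ 2).

Let kernel (k k1 : Z) : R := 16 * (/ absz k1 ^ 2 + / absz k ^ 2) * hs_term s v (k - k1).

Let B2_window_majorant (k : Z) (M : nat) : R :=
  sumL (fun k1 => Cmod (u k1) * B2_majorant v k k1) (zwindow M).

Lemma normu2_nonneg : 0 <= normu2.
Proof. apply zsum_nonneg; [apply wt_Cmod_sq_nonneg | exact u_L2]. Qed.

Lemma normv2_nonneg : 0 <= normv2.
Proof. apply zsum_nonneg; [apply wt_Cmod_sq_nonneg | exact v_Hs]. Qed.

Lemma sumL_Cmod_u_sq_le M : sumL (fun j => Cmod (u j) ^ 2) (zwindow M) <= normu2.
Proof.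
  apply Rle_trans with (sumL (fun k => wt 0 k * Cmod (u k) ^ 2) (zwindow M)).
  - apply sumL_le. intros z Hz. apply in_zwindow in Hz. rewrite wt0 by tauto. lra.
  - apply sumL_zwindow_le_zsum; [apply wt_Cmod_sq_nonneg | exact u_L2].
Qed.

Lemma wt_B2_window_majorant_sq_le k M : k <> 0%Z ->
  wt s k * B2_window_majorant k M ^ 2 <= normu2 * sumL (kernel k) (zwindow M).
Proof.
  intros Hk. pose proof (wt_pos s k).
  assert (Hmaj : wt s k * sumL (fun k1 => B2_majorant v k k1 ^ 2) (zwindow M)
                 <= sumL (kernel k) (zwindow M)).
  { rewrite <- sumL_scal. apply sumL_le. intros k1 Hk1. apply in_zwindow in Hk1.
    apply wt_B2_majorant_sq_le; tauto. }
  pose proof (sumL_Cauchy_Schwarz (fun j => Cmod (u j)) (B2_majorant v k) (zwindow M)) as HCS.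
  pose proof (sumL_Cmod_u_sq_le M). pose proof normu2_nonneg.
  assert (0 <= sumL (fun k1 => B2_majorant v k k1 ^ 2) (zwindow M))
    by (apply sumL_nonneg; intros; apply pow2_ge_0).
  unfold B2_window_majorant.
  apply Rle_trans with (wt s k * (normu2 * sumL (fun k1 => B2_majorant v k k1 ^ 2) (zwindow M))).
  - apply Rmult_le_compat_l; [lra|]. eapply Rle_trans; [exact HCS|].
    apply Rmult_le_compat_r; assumption.
  - rewrite Rmult_comm, Rmult_assoc. apply Rmult_le_compat_l; [lra|].
    rewrite Rmult_comm. exact Hmaj.
Qed.

Lemma sumL_kernel_le k M : k <> 0%Z -> sumL (kernel k) (zwindow M) <= 32 * normv2.
Proof.
  intros Hk.
  apply Rle_trans with (sumL (fun k1 => 32 * hs_term s v (k - k1)) (zwindow M)).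
  - apply sumL_le. intros k1 Hk1. apply in_zwindow in Hk1.
    pose proof (inv_absz_sq_le1 k Hk). pose proof (inv_absz_sq_le1 k1 (proj1 Hk1)).
    pose proof (inv_absz_sq_nonneg k). pose proof (inv_absz_sq_nonneg k1).
    pose proof (hs_term_nonneg s v (k - k1)). unfold kernel. nra.
  - rewrite sumL_scal. apply Rmult_le_compat_l; [lra|].
    apply sumL_hs_term_le; [exact v_Hs | intros x y Hxy; lia].
Qed.

Lemma sumL_sumL_kernel_le N M :
  sumL (fun k => sumL (kernel k) (zwindow M)) (zwindow N) <= 128 * normv2.
Proof.
  assert (Hsplit : forall k, sumL (kernel k) (zwindow M)
      = sumL (fun k1 => 16 * (/ absz k1 ^ 2 * hs_term s v (k - k1))) (zwindow M)
        + 16 * (/ absz k ^ 2 * sumL (fun k1 => hs_term s v (k - k1)) (zwindow M))).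
  { intros k. rewrite <- (sumL_scal (/ absz k ^ 2)), <- sumL_scal, <- sumL_plus.
    apply sumL_ext. intros. unfold kernel. ring. }
  rewrite (sumL_ext _ _ _ (fun k _ => Hsplit k)), sumL_plus, sumL_swap.
  rewrite (sumL_ext _
    (fun k1 => 16 * (/ absz k1 ^ 2 * sumL (fun k => hs_term s v (k - k1)) (zwindow N))))
    by (intros; rewrite <- !sumL_scal; reflexivity).
  rewrite !sumL_scal.
  assert (H1 : sumL (fun k1 => / absz k1 ^ 2 * sumL (fun k => hs_term s v (k - k1)) (zwindow N))
                 (zwindow M) <= 4 * normv2).
  { apply sumL_inv_absz_sq_mul_le; [exact normv2_nonneg|]. intros k1 _.
    apply sumL_hs_term_le; [exact v_Hs | intros x y Hxy; lia]. }
  assert (H2 : sumL (fun k => / absz k ^ 2 * sumL (fun k1 => hs_term s v (k - k1)) (zwindow M))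
                 (zwindow N) <= 4 * normv2).
  { apply sumL_inv_absz_sq_mul_le; [exact normv2_nonneg|]. intros k _.
    apply sumL_hs_term_le; [exact v_Hs | intros x y Hxy; lia]. }
  lra.
Qed.

Lemma sumL_Cmod_B2_term_le k M :
  sumL (fun k1 => Cmod (B2_term t u v k k1)) (zwindow M) <= B2_window_majorant k M.
Proof.
  apply sumL_le. intros k1 Hk1. apply in_zwindow in Hk1. apply Cmod_B2_term_le. tauto.
Qed.

Lemma B2_term_abs_summable k : k <> 0%Z -> ex_zsum_abs_C (B2_term t u v k).
Proof.
  intros Hk. pose proof (wt_pos s k).
  apply (ex_zsum_bounded _ (fun k1 => Cmod_ge_0 _) (sqrt (normu2 * (32 * normv2) / wt s k))).
  intros M. eapply Rle_trans; [apply sumL_Cmod_B2_term_le|].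
  assert (Hmaj : 0 <= B2_window_majorant k M).
  { apply sumL_nonneg. intros k1 Hk1. apply in_zwindow in Hk1.
    apply Rmult_le_pos; [apply Cmod_ge_0 | apply B2_majorant_nonneg; tauto]. }
  rewrite <- (sqrt_pow2 _ Hmaj). apply sqrt_le_1_alt.
  apply (Rmult_le_reg_l (wt s k)); [lra|].
  replace (wt s k * (normu2 * (32 * normv2) / wt s k)) with (normu2 * (32 * normv2))
    by (field; lra).
  eapply Rle_trans; [apply wt_B2_window_majorant_sq_le, Hk|].
  apply Rmult_le_compat_l; [exact normu2_nonneg | apply sumL_kernel_le, Hk].
Qed.

Lemma B2_window_bound N M :
  sumL (fun k => wt s k * Cmod (sumL_C (B2_term t u v k) (zwindow M)) ^ 2) (zwindow N)
  <= 128 * normu2 * normv2.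
Proof.
  apply Rle_trans with (sumL (fun k => normu2 * sumL (kernel k) (zwindow M)) (zwindow N)).
  - apply sumL_le. intros k Hk. apply in_zwindow in Hk.
    eapply Rle_trans; [|apply wt_B2_window_majorant_sq_le; tauto].
    apply Rmult_le_compat_l; [left; apply wt_pos|]. apply pow_incr. split; [apply Cmod_ge_0|].
    eapply Rle_trans; [apply Cmod_sumL_C_le | apply sumL_Cmod_B2_term_le].
  - rewrite sumL_scal. pose proof (sumL_sumL_kernel_le N M). pose proof normu2_nonneg. nra.
Qed.

Lemma is_lim_B2_window k : k <> 0%Z ->
  is_lim_seq (fun M => wt s k * Cmod (sumL_C (B2_term t u v k) (zwindow (S M))) ^ 2)
             (wt s k * Cmod (B2 t u v k) ^ 2).
Proof.
  intros Hk. pose proof (B2_term_abs_summable k Hk) as Habs.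
  assert (HRe := is_lim_zwindow_dominated (fun k1 => Re (B2_term t u v k k1)) _
                   (fun k1 => re_le_Cmod _) Habs).
  assert (HIm := is_lim_zwindow_dominated (fun k1 => Im (B2_term t u v k k1)) _
                   (fun k1 => im_le_Cmod _) Habs).
  set (PRe := fun M => sumL (fun k1 => Re (B2_term t u v k k1)) (zwindow (S M))) in HRe.
  set (PIm := fun M => sumL (fun k1 => Im (B2_term t u v k k1)) (zwindow (S M))) in HIm.
  apply (is_lim_seq_ext (fun M => wt s k * (PRe M * PRe M + PIm M * PIm M))).
  { intros M. rewrite Cmod2_alt. unfold PRe, PIm, sumL_C. simpl. ring. }
  replace (wt s k * Cmod (B2 t u v k) ^ 2) with
    (wt s k * (zsum (fun k1 => Re (B2_term t u v k k1)) * zsum (fun k1 => Re (B2_term t u v k k1))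
             + zsum (fun k1 => Im (B2_term t u v k k1)) * zsum (fun k1 => Im (B2_term t u v k k1))))
    by (rewrite Cmod2_alt; unfold B2, zsum_C; simpl; ring).
  apply is_lim_seq_mult'; [apply is_lim_seq_const|].
  apply is_lim_seq_plus'; apply is_lim_seq_mult'; assumption.
Qed.

Lemma B2_Hs_sq_le :
  in_Hs s (B2 t u v) /\ zsum (fun k => wt s k * Cmod (B2 t u v k) ^ 2) <= 128 * normu2 * normv2.
Proof.
  apply ex_zsum_bounded; [apply wt_Cmod_sq_nonneg|]. intros N.
  assert (Hlim := is_lim_seq_sumL
    (fun M k => wt s k * Cmod (sumL_C (B2_term t u v k) (zwindow (S M))) ^ 2)
    (fun k => wt s k * Cmod (B2 t u v k) ^ 2) (zwindow N)).
  refine (is_lim_seq_le _ (fun _ => 128 * normu2 * normv2) _ _ _ (Hlim _) (is_lim_seq_const _)).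
  - intros M. apply B2_window_bound.
  - intros k Hk. apply in_zwindow in Hk. apply is_lim_B2_window. tauto.
Qed.

End B2Estimate.

Theorem lemma7p6 (s : R) (hs1 : -7/4 < s) (hs2 : s <= 0) :
  exists c2 : R, 0 <= c2 /\
    forall (t : R) (u v : zseq), in_Hs 0 u -> in_Hs s v ->
      (forall k : Z, k <> 0%Z -> ex_zsum_abs_C (B2_term t u v k)) /\
      in_Hs s (B2 t u v) /\
      Hs_norm s (B2 t u v) <= c2 * Hs_norm 0 u * Hs_norm s v.
Proof.
  exists (sqrt 128). split; [apply sqrt_pos|].
  intros t u v Hu Hv.
  assert (Hs : -2 <= s <= 0) by lra.
  destruct (B2_Hs_sq_le s t u v Hs Hu Hv) as [HB2 Hbound].
  split; [exact (B2_term_abs_summable s t u v Hs Hu Hv)|].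
  split; [exact HB2|].
  pose proof (normu2_nonneg u Hu); pose proof (normv2_nonneg s v Hv).
  unfold Hs_norm. rewrite <- !sqrt_mult by lra.
  apply sqrt_le_1_alt. lra.
Qed.
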